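(* Let $X\neq\emptyset$ be a set and let $\Phi$ be a nonempty set of bounded functions $X\to\mathbb{R}$. Let $\tau_{D_X}$ be the topology on $X$ induced by the extended pseudo-metric $D_X$, and let $\tau_{\mathrm{in}}$ be the initial topology on $X$ with respect to $\Phi$ (the coarsest topology making every $\varphi\in\Phi$ continuous, $\mathbb{R}$ carrying the Euclidean topology). Then $\tau_{D_X}$ is finer than $\tau_{\mathrm{in}}$. Moreover, if $\Phi$ is totally bounded with respect to $D_\Phi$, then $\tau_{D_X}=\tau_{\mathrm{in}}$.
   Context: $D_\Phi(\varphi_1,\varphi_2):=\|\varphi_1-\varphi_2\|_\infty=\sup_{x\in X}|\varphi_1(x)-\varphi_2(x)|$ for $\varphi_1,\varphi_2\in\Phi$. The extended pseudo-metric $D_X$ on $X$ is $D_X(x_1,x_2):=\sup_{\varphi\in\Phi}|\varphi(x_1)-\varphi(x_2)|$; its topology $\tau_{D_X}$ has as a base the balls $B_X(x,\varepsilon)=\{x'\in X: D_X(x,x')<\varepsilon\}$, $x\in X$, $\varepsilon>0$. *)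

From Stdlib Require Import Reals List.
Open Scope R_scope.

(* D_X(x1,x2) < eps, where D_X(x1,x2) = sup_{phi in Phi} |phi x1 - phi x2| (possibly +oo):
   unfolded as "the sup is some real strictly below eps". *)
Definition DX_lt {X : Type} (Phi : (X -> R) -> Prop) (x1 x2 : X) (eps : R) : Prop :=
  exists d, d < eps /\ forall phi, Phi phi -> Rabs (phi x1 - phi x2) <= d.

Definition ball_X {X : Type} (Phi : (X -> R) -> Prop) (x : X) (eps : R) : X -> Prop :=
  fun x' => DX_lt Phi x x' eps.

Definition DX_open {X : Type} (Phi : (X -> R) -> Prop) (U : X -> Prop) : Prop :=
  forall x, U x -> exists eps, 0 < eps /\ forall x', ball_X Phi x eps x' -> U x'.

Definition DPhi_lt {X : Type} (phi1 phi2 : X -> R) (eps : R) : Prop :=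
  exists d, d < eps /\ forall x, Rabs (phi1 x - phi2 x) <= d.

Definition totally_bounded_DPhi {X : Type} (Phi : (X -> R) -> Prop) : Prop :=
  forall eps, 0 < eps ->
    exists l : list (X -> R),
      (forall psi, In psi l -> Phi psi) /\
      (forall phi, Phi phi -> exists psi, In psi l /\ DPhi_lt phi psi eps).

Definition bounded_fun {X : Type} (f : X -> R) : Prop :=
  exists M, forall x, Rabs (f x) <= M.

Definition R_open (V : R -> Prop) : Prop :=
  forall y, V y -> exists e, 0 < e /\ forall z, Rabs (z - y) < e -> V z.

(* T is a topology on X (sets as predicates, T required to respect extensional equality). *)
Definition is_topology {X : Type} (T : (X -> Prop) -> Prop) : Prop :=
  (forall A B : X -> Prop, (forall x, A x <-> B x) -> T A -> T B) /\
  T (fun _ => True) /\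
  (forall A B, T A -> T B -> T (fun x => A x /\ B x)) /\
  (forall S : (X -> Prop) -> Prop, (forall A, S A -> T A) ->
     T (fun x => exists A, S A /\ A x)).

Definition init_open {X : Type} (Phi : (X -> R) -> Prop) (U : X -> Prop) : Prop :=
  forall T : (X -> Prop) -> Prop, is_topology T ->
    (forall phi V, Phi phi -> R_open V -> T (fun x => V (phi x))) -> T U.

(* The balls of D_X are open in the initial topology only up to finitely many
   coordinates: a D_X-ball of radius e around x contains the set of y with
   |psi y - psi x| < e/3 for all psi in a finite e/3-net of Phi, because each
   phi in Phi is uniformly e/3-close to some psi of the net.  That set is a
   finite intersection of preimages of open intervals, hence open in every
   topology making Phi continuous.  The converse inclusion needs no hypothesis:
   D_X-open sets form a topology in which every phi in Phi is continuous
   (|phi x - phi x'| <= D_X(x, x')). *)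

From Stdlib Require Import Reals List Lra.
Open Scope R_scope.

Lemma R_open_ball (c r : R) : R_open (fun z => Rabs (z - c) < r).
Proof.
  intros y Hy. exists (r - Rabs (y - c)); split; [lra|].
  intros z Hz. pose proof (Rabs_triang (z - y) (y - c)) as Htri.
  replace (z - y + (y - c)) with (z - c) in Htri by ring. lra.
Qed.

Lemma Rabs_sub_le3 (a b c d : R) :
  Rabs (a - d) <= Rabs (a - b) + Rabs (b - c) + Rabs (c - d).
Proof.
  replace (a - d) with ((a - b) + (b - c) + (c - d)) by ring.
  pose proof (Rabs_triang (a - b + (b - c)) (c - d)).
  pose proof (Rabs_triang (a - b) (b - c)). lra.
Qed.

Lemma list_Rabs_lt_max {X : Type} (l : list (X -> R)) (x y : X) (r : R) :
  0 < r -> (forall psi, In psi l -> Rabs (psi x - psi y) < r) ->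
  exists m, m < r /\ forall psi, In psi l -> Rabs (psi x - psi y) <= m.
Proof.
  intros Hr; induction l as [|p l IH]; intros Hlt.
  - exists 0; split; [exact Hr | intros _ []].
  - destruct IH as [m [Hm Hle]]; [intros psi Hin; apply Hlt; right; exact Hin|].
    exists (Rmax m (Rabs (p x - p y))); split.
    + apply Rmax_lub_lt; [exact Hm | apply Hlt; left; reflexivity].
    + intros psi [<- | Hin]; [apply Rmax_r|].
      eapply Rle_trans; [apply Hle; exact Hin | apply Rmax_l].
Qed.

Section Topologies.

Variable X : Type.

Lemma topology_open_of_local (T : (X -> Prop) -> Prop) (U : X -> Prop) :
  is_topology T ->
  (forall x, U x -> exists A, T A /\ A x /\ forall y, A y -> U y) -> T U.
Proof.
  intros [Hext [_ [_ Hunion]]] Hloc.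
  eapply Hext; [| apply (Hunion (fun A => T A /\ forall y, A y -> U y));
                  intros A [HA _]; exact HA].
  intros x; split.
  - intros [A [[_ HAU] Ax]]. exact (HAU x Ax).
  - intros Ux. destruct (Hloc x Ux) as [A [HA [Ax HAU]]].
    exists A; split; [split|]; assumption.
Qed.

Variable Phi : (X -> R) -> Prop.

Lemma DX_open_topology : is_topology (DX_open Phi).
Proof.
  split; [|split; [|split]].
  - intros A B HAB HA x Bx. destruct (HA x (proj2 (HAB x) Bx)) as [e [He Hball]].
    exists e; split; [exact He|]. intros x' Hx'. apply HAB, Hball, Hx'.
  - intros x _; exists 1; split; [lra | trivial].
  - intros A B HA HB x [Ax Bx].
    destruct (HA x Ax) as [e1 [He1 H1]]. destruct (HB x Bx) as [e2 [He2 H2]].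
    exists (Rmin e1 e2); split; [apply Rmin_pos; assumption|].
    pose proof (Rmin_l e1 e2); pose proof (Rmin_r e1 e2).
    intros x' [d [Hd Hle]]; split.
    + apply H1; exists d; split; [lra | exact Hle].
    + apply H2; exists d; split; [lra | exact Hle].
  - intros S HS x [A [SA Ax]].
    destruct (HS A SA x Ax) as [e [He Hball]]. exists e; split; [exact He|].
    intros x' Hx'; exists A; split; [exact SA | apply Hball, Hx'].
Qed.

Lemma DX_open_preimage (phi : X -> R) (V : R -> Prop) :
  Phi phi -> R_open V -> DX_open Phi (fun x => V (phi x)).
Proof.
  intros Hphi HV x Vx. destruct (HV _ Vx) as [e [He HVe]].
  exists e; split; [exact He|]. intros x' [d [Hd Hle]]. apply HVe.
  specialize (Hle phi Hphi). rewrite Rabs_minus_sym in Hle. lra.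
Qed.

Lemma init_open_DX_open (U : X -> Prop) : init_open Phi U -> DX_open Phi U.
Proof.
  intros HU. apply HU; [apply DX_open_topology | intros; apply DX_open_preimage; assumption].
Qed.

Lemma topology_open_finite_preimage_balls (T : (X -> Prop) -> Prop)
  (l : list (X -> R)) (x : X) (r : R) :
  is_topology T ->
  (forall phi V, Phi phi -> R_open V -> T (fun y => V (phi y))) ->
  (forall psi, In psi l -> Phi psi) ->
  T (fun y => forall psi, In psi l -> Rabs (psi y - psi x) < r).
Proof.
  intros HT Hpre; pose proof HT as [Hext [Htrue [Hinter _]]].
  induction l as [|p l IH]; intros Hl.
  - eapply Hext; [| exact Htrue]. intros y; split; [intros _ _ [] | trivial].
  - assert (Hp : T (fun y => Rabs (p y - p x) < r)).
    { apply (Hpre p (fun z => Rabs (z - p x) < r));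
        [apply Hl; left; reflexivity | apply R_open_ball]. }
    assert (Hrest : T (fun y => forall psi, In psi l -> Rabs (psi y - psi x) < r)).
    { apply IH. intros psi Hin; apply Hl; right; exact Hin. }
    eapply Hext; [| exact (Hinter _ _ Hp Hrest)].
    intros y; split.
    + intros [H1 H2] psi [<- | Hin]; [exact H1 | exact (H2 psi Hin)].
    + intros H; split; [apply H; left; reflexivity | intros psi Hin; apply H; right; exact Hin].
Qed.

Lemma net_nbhd_sub_ball_X (l : list (X -> R)) (x y : X) (e : R) :
  0 < e ->
  (forall phi, Phi phi -> exists psi, In psi l /\ DPhi_lt phi psi (e / 3)) ->
  (forall psi, In psi l -> Rabs (psi y - psi x) < e / 3) ->
  ball_X Phi x e y.
Proof.
  intros He Hnet Hnear.
  destruct (list_Rabs_lt_max l x y (e / 3)) as [m [Hm Hle]]; [lra | |].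
  { intros psi Hin. rewrite Rabs_minus_sym. apply Hnear, Hin. }
  exists (2 * (e / 3) + m); split; [lra|].
  intros phi Hphi. destruct (Hnet phi Hphi) as [psi [Hin [d [Hd Hclose]]]].
  pose proof (Rabs_sub_le3 (phi x) (psi x) (psi y) (phi y)) as Htri.
  pose proof (Hclose x); pose proof (Hclose y); pose proof (Hle psi Hin).
  rewrite (Rabs_minus_sym (psi y)) in Htri. lra.
Qed.

Lemma DX_open_init_open (U : X -> Prop) :
  totally_bounded_DPhi Phi -> DX_open Phi U -> init_open Phi U.
Proof.
  intros Htb HU T HT Hpre. apply topology_open_of_local; [exact HT|].
  intros x Ux. destruct (HU x Ux) as [e [He Hball]].
  destruct (Htb (e / 3)) as [l [HlPhi Hnet]]; [lra|].
  exists (fun y => forall psi, In psi l -> Rabs (psi y - psi x) < e / 3).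
  split; [|split].
  - apply topology_open_finite_preimage_balls; assumption.
  - intros psi _. rewrite Rminus_diag, Rabs_R0. lra.
  - intros y Hy. apply Hball, (net_nbhd_sub_ball_X l); assumption.
Qed.

End Topologies.

Theorem mainTheorem1 (X : Type) (Phi : (X -> R) -> Prop)
  (hX : exists x : X, True)
  (hPhi : exists phi, Phi phi)
  (hbdd : forall phi, Phi phi -> bounded_fun phi) :
  (forall U : X -> Prop, init_open Phi U -> DX_open Phi U) /\
  (totally_bounded_DPhi Phi ->
     forall U : X -> Prop, DX_open Phi U <-> init_open Phi U).
Proof.
  split; [exact (init_open_DX_open X Phi)|].
  intros Htb U; split.
  - exact (DX_open_init_open X Phi U Htb).
  - exact (init_open_DX_open X Phi U).
Qed.
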